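(* Let $A$ be a real matrix with $d_\ell$ columns, $H:=A^\top A$, and suppose $\mu I\preceq H\preceq LI$ for some $0<\mu\le L$. Let $\lambda_s\ge 0$, and for $t=1,\dots,T$ let $b_t$ be vectors (of the row dimension of $A$) and $c_t\in\mathbb{R}^{d_\ell}$. Define $f_t(u)=\frac12\|Au-b_t\|_2^2$, the unanchored minimizer $u_t^\circ:=\arg\min_{u\in\mathbb{R}^{d_\ell}} f_t(u)$ and the anchored minimizer \[ u_t^\star:=\arg\min_{u\in\mathbb{R}^{d_\ell}}\Big\{f_t(u)+\frac{\lambda_s}{2}\|u-c_t\|_2^2\Big\}. \] Then for every $t=2,\dots,T$, \[ \|u_t^\star-u_{t-1}^\star\|_2\le\kappa(\lambda_s)\|u_t^\circ-u_{t-1}^\circ\|_2+\alpha(\lambda_s)\|c_t-c_{t-1}\|_2, \] where \[ \kappa(\lambda_s):=\big\|(H+\lambda_s I)^{-1}H\big\|_{\mathrm{op}}\le\frac{L}{\mu+\lambda_s},\qquad \alpha(\lambda_s):=\big\|\lambda_s(H+\lambda_s I)^{-1}\big\|_{\mathrm{op}}\le\frac{\lambda_s}{\mu+\lambda_s}. \] Consequently, with $V_T^\circ:=\sum_{t=2}^T\|u_t^\circ-u_{t-1}^\circ\|_2$, $V_T^c:=\sum_{t=2}^T\|c_t-c_{t-1}\|_2$ and $V_T^\star:=\sum_{t=2}^T\|u_t^\star-u_{t-1}^\star\|_2$, \[ V_T^\star\le\kappa(\lambda_s)V_T^\circ+\alpha(\lambda_s)V_T^c . \]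
   Context: $\|\cdot\|_2$ is the Euclidean norm, $\|\cdot\|_{\mathrm{op}}$ the operator (spectral) norm, and $\preceq$ the Loewner order on symmetric matrices. *)

From HB Require Import structures.
From mathcomp Require Import all_boot all_order all_algebra.
From mathcomp Require Import boolp classical_sets reals.
Set Implicit Arguments. Unset Strict Implicit. Unset Printing Implicit Defensive.
Import Order.TTheory GRing.Theory Num.Theory.
Local Open Scope ring_scope.
Local Open Scope classical_set_scope.

Definition enorm (R : realType) (n : nat) (x : 'cV[R]_n) : R :=
  Num.sqrt (\sum_(i < n) (x i 0) ^+ 2).

Definition opnorm (R : realType) (m n : nat) (M : 'M[R]_(m, n)) : R :=
  sup [set enorm (M *m x) | x in [set x : 'cV[R]_n | enorm x <= 1]].

Definition loewner_le (R : realType) (n : nat) (A B : 'M[R]_n) : Prop :=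
  forall x : 'cV[R]_n, 0 <= ((x^T *m (B - A) *m x) 0 0).

Definition is_argmin (R : realType) (n : nat) (f : 'cV[R]_n -> R) (u : 'cV[R]_n) : Prop :=
  forall v, f u <= f v.

From HB Require Import structures.
From mathcomp Require Import all_boot all_order all_algebra.
From mathcomp Require Import boolp classical_sets reals.
From mathcomp Require Import ring lra zify.
Set Implicit Arguments. Unset Strict Implicit. Unset Printing Implicit Defensive.
Import Order.TTheory GRing.Theory Num.Theory.
Local Open Scope ring_scope.
Local Open Scope classical_set_scope.

(** Write [H := A^T A] and [M := H + lam I].  The first-order conditions
    [A^T (A uo - b) = 0] and [A^T (A us - b) + lam (us - c) = 0] give the closed
    form [us = M^-1 H uo + lam M^-1 c], which is linear in [(uo, c)], so the drift
    of [us] is bounded by the operator norms of its two linear parts.  Both are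
    controlled by the coercivity [(mu + lam) |y|^2 <= <y, M y>]: when [M y = H x]
    the right-hand side is [<A y, A x> <= L |y| |x|], and when [M y = lam x] it is
    [lam <y, x> <= lam |y| |x|]. *)

Section EuclideanNorm.
Variable R : realType.

Definition dot (n : nat) (u v : 'cV[R]_n) : R := (u^T *m v) 0 0.

Lemma dotE n (u v : 'cV[R]_n) : dot u v = \sum_i u i 0 * v i 0.
Proof. by rewrite /dot mxE; apply: eq_bigr => i _; rewrite mxE. Qed.

Lemma dotC n (u v : 'cV[R]_n) : dot u v = dot v u.
Proof. by rewrite !dotE; apply: eq_bigr => i _; rewrite mulrC. Qed.

Lemma dot0r n (u : 'cV[R]_n) : dot u 0 = 0.
Proof. by rewrite /dot mulmx0 mxE. Qed.

Lemma dotDr n (u v w : 'cV[R]_n) : dot u (v + w) = dot u v + dot u w.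
Proof. by rewrite /dot mulmxDr mxE. Qed.

Lemma dotZr n a (u v : 'cV[R]_n) : dot u (a *: v) = a * dot u v.
Proof. by rewrite /dot -scalemxAr mxE. Qed.

Lemma dotBr n (u v w : 'cV[R]_n) : dot u (v - w) = dot u v - dot u w.
Proof. by rewrite dotDr -scaleN1r dotZr mulN1r. Qed.

Lemma dotDl n (u v w : 'cV[R]_n) : dot (v + w) u = dot v u + dot w u.
Proof. by rewrite dotC dotDr !(dotC u). Qed.

Lemma dotZl n a (u v : 'cV[R]_n) : dot (a *: v) u = a * dot v u.
Proof. by rewrite dotC dotZr dotC. Qed.

Lemma dotBl n (u v w : 'cV[R]_n) : dot (v - w) u = dot v u - dot w u.
Proof. by rewrite dotC dotBr !(dotC u). Qed.

Lemma dot_mulmxl m n (A : 'M[R]_(m, n)) u v : dot (A *m u) v = dot u (A^T *m v).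
Proof. by rewrite /dot trmx_mul mulmxA. Qed.

Lemma dotvv_ge0 n (u : 'cV[R]_n) : 0 <= dot u u.
Proof. by rewrite dotE; apply: sumr_ge0 => i _; rewrite -expr2 sqr_ge0. Qed.

Lemma dotvv_eq0 n (u : 'cV[R]_n) : dot u u = 0 -> u = 0.
Proof.
rewrite dotE => /eqP; rewrite psumr_eq0 => [/allP u0|i _]; last first.
  by rewrite -expr2 sqr_ge0.
apply/matrixP => i j; rewrite ord1 mxE.
by have /implyP := u0 i (mem_index_enum _); rewrite mulf_eq0 orbb => /(_ isT)/eqP.
Qed.

Lemma enormE n (u : 'cV[R]_n) : enorm u = Num.sqrt (dot u u).
Proof. by rewrite /enorm dotE; congr Num.sqrt; apply: eq_bigr => i _; rewrite expr2. Qed.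

Lemma enorm_ge0 n (u : 'cV[R]_n) : 0 <= enorm u.
Proof. exact: sqrtr_ge0. Qed.

Lemma enorm2 n (u : 'cV[R]_n) : enorm u ^+ 2 = dot u u.
Proof. by rewrite enormE sqr_sqrtr // dotvv_ge0. Qed.

Lemma enorm0 n : enorm (0 : 'cV[R]_n) = 0.
Proof. by rewrite enormE dot0r sqrtr0. Qed.

Lemma enorm_eq0 n (u : 'cV[R]_n) : enorm u = 0 -> u = 0.
Proof. by move=> u0; apply: dotvv_eq0; rewrite -enorm2 u0 expr0n. Qed.

Lemma enormZ n a (u : 'cV[R]_n) : enorm (a *: u) = `|a| * enorm u.
Proof. by rewrite !enormE dotZl dotZr mulrA -expr2 sqrtrM ?sqr_ge0 // sqrtr_sqr. Qed.

Lemma ler_of_sqr (a b : R) : 0 <= b -> a ^+ 2 <= b ^+ 2 -> a <= b.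
Proof. by move=> *; nra. Qed.

Lemma cauchy_schwarz n (u v : 'cV[R]_n) : dot u v <= enorm u * enorm v.
Proof.
have [/dotvv_eq0 ->|v_neq0] := eqVneq (dot v v) 0.
  by rewrite dot0r mulr_ge0 ?enorm_ge0.
apply: ler_of_sqr; first by rewrite mulr_ge0 ?enorm_ge0.
have v_gt0 : 0 < dot v v by rewrite lt_neqAle eq_sym v_neq0 dotvv_ge0.
pose w := u - (dot u v / dot v v) *: v.
have gram : dot u u * dot v v - dot u v ^+ 2 = dot w w * dot v v.
  by rewrite !(dotBl, dotBr, dotZl, dotZr) (dotC v u); field; rewrite gt_eqF.
rewrite exprMn !enorm2 -subr_ge0 gram.
by rewrite mulr_ge0 ?dotvv_ge0.
Qed.

Lemma ler_enormD n (u v : 'cV[R]_n) : enorm (u + v) <= enorm u + enorm v.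
Proof.
apply: ler_of_sqr; first by rewrite addr_ge0 ?enorm_ge0.
rewrite enorm2 sqrrD !enorm2 !(dotDl, dotDr) (dotC v u).
by have := cauchy_schwarz u v; rewrite mulr2n; lra.
Qed.

Lemma loewner_leE n (A B : 'M[R]_n) :
  loewner_le A B <-> forall x, dot x (A *m x) <= dot x (B *m x).
Proof.
have quadE x : (x^T *m (B - A) *m x) 0 0 = dot x (B *m x) - dot x (A *m x).
  by rewrite -dotBr -mulmxBl /dot mulmxA.
by split=> AB x; [rewrite -subr_ge0 -quadE | rewrite quadE subr_ge0].
Qed.

End EuclideanNorm.

Section OperatorNorm.
Variables (R : realType) (m n : nat) (M : 'M[R]_(m, n)) (k : R).
Hypothesis k_ge0 : 0 <= k.
Hypothesis M_bounded : forall x, enorm (M *m x) <= k * enorm x.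

Let unit_image := [set enorm (M *m x) | x in [set x : 'cV[R]_n | enorm x <= 1]].

Lemma unit_image_ubound : ubound unit_image k.
Proof.
move=> _ [x x_le1 <-]; apply: le_trans (M_bounded x) _.
by rewrite -[leRHS]mulr1 ler_wpM2l.
Qed.

Lemma opnorm_le : opnorm M <= k.
Proof.
apply: ge_sup; last exact: unit_image_ubound.
by exists (enorm (M *m 0)), 0 => //; rewrite /= enorm0 ler01.
Qed.

Lemma enorm_mulmx_le_opnorm x : enorm (M *m x) <= opnorm M * enorm x.
Proof.
have [/enorm_eq0 ->|x_neq0] := eqVneq (enorm x) 0.
  by rewrite mulmx0 !enorm0 mulr0.
have x_gt0 : 0 < enorm x by rewrite lt_neqAle eq_sym x_neq0 enorm_ge0.
have x1_le1 : enorm ((enorm x)^-1 *: x) <= 1.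
  by rewrite enormZ ger0_norm ?invr_ge0 ?enorm_ge0 // mulVf.
have img : unit_image (enorm (M *m ((enorm x)^-1 *: x))) by exists ((enorm x)^-1 *: x).
have := ub_le_sup (ex_intro _ k unit_image_ubound) img.
rewrite -scalemxAr enormZ ger0_norm ?invr_ge0 ?enorm_ge0 //.
by rewrite mulrC ler_pdivrMr // mulrC.
Qed.

End OperatorNorm.

Section FirstOrderOptimality.
Variable R : realType.

Lemma quadratic_ge0_slope_eq0 (g q : R) :
  0 <= q -> (forall s, 0 <= s * g + s ^+ 2 * q) -> g = 0.
Proof.
move=> q_ge0 ge0; have q1_gt0 : 0 < q + 1 by rewrite ltr_wpDl.
have := ge0 (- g / (q + 1)).
have -> : - g / (q + 1) * g + (- g / (q + 1)) ^+ 2 * q = - (g ^+ 2) / (q + 1) ^+ 2.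
  by field; rewrite gt_eqF.
rewrite pmulr_lge0 ?invr_gt0 ?exprn_gt0 // oppr_ge0 => g2_le0.
by apply/eqP; rewrite -sqrf_eq0 eq_le g2_le0 sqr_ge0.
Qed.

Variables (m n : nat) (A : 'M[R]_(m, n)) (b : 'cV[R]_m).

Lemma ridge_argmin_grad (c u : 'cV[R]_n) (lam : R) : 0 <= lam ->
  is_argmin (fun u => 2^-1 * enorm (A *m u - b) ^+ 2
                      + lam / 2 * enorm (u - c) ^+ 2) u ->
  A^T *m (A *m u - b) + lam *: (u - c) = 0.
Proof.
move=> lam_ge0 u_min; set G := _ + _.
pose f v := 2^-1 * enorm (A *m v - b) ^+ 2 + lam / 2 * enorm (v - c) ^+ 2.
pose q := (dot (A *m G) (A *m G) + lam * dot G G) / 2.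
have dotG v : dot v G = dot (A *m v) (A *m u - b) + lam * dot v (u - c).
  by rewrite /G [LHS]dotDr dotZr -dot_mulmxl.
have f_shift s : f (u + s *: G) = f u + s * dot G G + s ^+ 2 * q.
  rewrite /f mulmxDr -scalemxAr (addrAC _ (s *: _)) (addrAC _ (s *: _)).
  rewrite !enorm2 dotG /q; clearbody G; move: (A *m u - b) (u - c) (A *m G) => r w AG.
  by rewrite !(dotDl, dotDr, dotZl, dotZr) (dotC r AG) (dotC w G); field.
apply: dotvv_eq0; apply: (@quadratic_ge0_slope_eq0 _ q).
  by rewrite /q divr_ge0 // addr_ge0 ?mulr_ge0 ?dotvv_ge0.
move=> s; have : f u <= f (u + s *: G) := u_min _.
by rewrite f_shift; lra.
Qed.

Lemma lsq_argmin_grad (u : 'cV[R]_n) :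
  is_argmin (fun u => 2^-1 * enorm (A *m u - b) ^+ 2) u -> A^T *m (A *m u - b) = 0.
Proof.
move=> u_min; have := @ridge_argmin_grad 0 u 0 (lexx 0).
by rewrite scale0r addr0; apply=> v; rewrite !mul0r !addr0; exact: u_min.
Qed.

End FirstOrderOptimality.

Section RidgeMinimizers.
Variables (R : realType) (m n : nat) (A : 'M[R]_(m, n)) (mu L lam : R).
Hypotheses (mu_gt0 : 0 < mu) (mu_le_L : mu <= L) (lam_ge0 : 0 <= lam).
Hypotheses (mu_le_H : loewner_le mu%:M (A^T *m A)) (H_le_L : loewner_le (A^T *m A) L%:M).

Let M := A^T *m A + lam%:M.

Let L_ge0 : 0 <= L. Proof. exact: le_trans (ltW mu_gt0) mu_le_L. Qed.
Let mulam_gt0 : 0 < mu + lam. Proof. by rewrite ltr_wpDr. Qed.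
Let kappa_bound_ge0 : 0 <= L / (mu + lam). Proof. by rewrite divr_ge0 // ltW. Qed.
Let alpha_bound_ge0 : 0 <= lam / (mu + lam). Proof. by rewrite divr_ge0 // ltW. Qed.

Lemma dot_gram_mx x y : dot x (A^T *m A *m y) = dot (A *m x) (A *m y).
Proof. by rewrite -mulmxA -dot_mulmxl. Qed.

Lemma mu_le_dotA x : mu * dot x x <= dot (A *m x) (A *m x).
Proof.
by have := (loewner_leE _ _).1 mu_le_H x; rewrite mul_scalar_mx dotZr dot_gram_mx.
Qed.

Lemma dotA_le_L x : dot (A *m x) (A *m x) <= L * dot x x.
Proof.
by have := (loewner_leE _ _).1 H_le_L x; rewrite mul_scalar_mx dotZr dot_gram_mx.
Qed.

Lemma dotA_le x y : dot (A *m x) (A *m y) <= L * enorm x * enorm y.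
Proof.
apply: le_trans (cauchy_schwarz _ _) _.
apply: ler_of_sqr; first by rewrite !mulr_ge0 ?enorm_ge0.
have -> : (L * enorm x * enorm y) ^+ 2 = (L * enorm x ^+ 2) * (L * enorm y ^+ 2) by ring.
by rewrite exprMn !enorm2 ler_pM ?dotvv_ge0 ?dotA_le_L.
Qed.

Lemma dot_ridge_mx x : dot x (M *m x) = dot (A *m x) (A *m x) + lam * dot x x.
Proof. by rewrite /M mulmxDl mul_scalar_mx dotDr dotZr dot_gram_mx. Qed.

Lemma ridge_mx_coercive x : (mu + lam) * dot x x <= dot x (M *m x).
Proof. by rewrite dot_ridge_mx mulrDl lerD2r mu_le_dotA. Qed.

Lemma ridge_mx_unit : M \in unitmx.
Proof.
rewrite -unitmx_tr unitmxE unitfE; apply/negP => /det0P[v v_neq0].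
rewrite -[v]trmxK -trmx_mul => /eqP; rewrite trmx_eq0 => /eqP Mv0.
have := ridge_mx_coercive v^T; rewrite Mv0 dot0r => coercive.
have /dotvv_eq0 v0 : dot v^T v^T = 0.
  by apply/eqP; rewrite eq_le dotvv_ge0 andbT -(pmulr_rle0 _ mulam_gt0).
by move: v_neq0; rewrite -[v]trmxK v0 trmx0 eqxx.
Qed.

Lemma enorm_le_of_dot_ridge_mx y K e : 0 <= K -> 0 <= e ->
  dot y (M *m y) <= K * enorm y * e -> enorm y <= K / (mu + lam) * e.
Proof.
move=> K_ge0 e_ge0 le_Ke.
have le_y : (mu + lam) * enorm y ^+ 2 <= K * enorm y * e.
  by rewrite enorm2; apply: le_trans (ridge_mx_coercive y) le_Ke.
have /predU1P[->|y_gt0] : (enorm y == 0) || (0 < enorm y) by rewrite -le0r enorm_ge0.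
  by rewrite mulr_ge0 // divr_ge0 // ltW.
rewrite mulrAC ler_pdivlMr // mulrC.
by move: le_y; rewrite expr2 mulrA [K * _ * e]mulrAC ler_pM2r.
Qed.

Lemma enorm_kappa_le x :
  enorm (invmx M *m (A^T *m A) *m x) <= L / (mu + lam) * enorm x.
Proof.
apply: enorm_le_of_dot_ridge_mx; rewrite ?enorm_ge0 //.
by rewrite -mulmxA (mulKVmx ridge_mx_unit) dot_gram_mx dotA_le.
Qed.

Lemma enorm_alpha_le x : enorm ((lam *: invmx M) *m x) <= lam / (mu + lam) * enorm x.
Proof.
apply: enorm_le_of_dot_ridge_mx; rewrite ?enorm_ge0 //.
rewrite -scalemxAl -scalemxAr (mulKVmx ridge_mx_unit) dotZr -mulrA.
by rewrite ler_wpM2l ?cauchy_schwarz.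
Qed.

Lemma opnorm_kappa_le : opnorm (invmx M *m (A^T *m A)) <= L / (mu + lam).
Proof. exact: opnorm_le kappa_bound_ge0 enorm_kappa_le. Qed.

Lemma opnorm_alpha_le : opnorm (lam *: invmx M) <= lam / (mu + lam).
Proof. exact: opnorm_le alpha_bound_ge0 enorm_alpha_le. Qed.

Lemma ridge_argmin_closed_form b c uo us :
  is_argmin (fun u => 2^-1 * enorm (A *m u - b) ^+ 2) uo ->
  is_argmin (fun u => 2^-1 * enorm (A *m u - b) ^+ 2
                      + lam / 2 * enorm (u - c) ^+ 2) us ->
  us = invmx M *m (A^T *m A) *m uo + (lam *: invmx M) *m c.
Proof.
move=> /lsq_argmin_grad uo_grad /(ridge_argmin_grad lam_ge0) us_grad.
apply: (can_inj (mulKmx ridge_mx_unit)).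
rewrite mulmxDr -!mulmxA -scalemxAl -scalemxAr !(mulKVmx ridge_mx_unit).
move/eqP: uo_grad; rewrite mulmxBr subr_eq0 => /eqP ->.
apply/eqP; rewrite -subr_eq0 -us_grad /M mulmxDl mul_scalar_mx -mulmxA.
by rewrite mulmxBr scalerBr opprD addrACA.
Qed.

Lemma ridge_argmin_drift b1 b2 c1 c2 uo1 uo2 us1 us2 :
  is_argmin (fun u => 2^-1 * enorm (A *m u - b1) ^+ 2) uo1 ->
  is_argmin (fun u => 2^-1 * enorm (A *m u - b2) ^+ 2) uo2 ->
  is_argmin (fun u => 2^-1 * enorm (A *m u - b1) ^+ 2
                      + lam / 2 * enorm (u - c1) ^+ 2) us1 ->
  is_argmin (fun u => 2^-1 * enorm (A *m u - b2) ^+ 2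
                      + lam / 2 * enorm (u - c2) ^+ 2) us2 ->
  enorm (us2 - us1) <= opnorm (invmx M *m (A^T *m A)) * enorm (uo2 - uo1)
                       + opnorm (lam *: invmx M) * enorm (c2 - c1).
Proof.
move=> uo1_min uo2_min us1_min us2_min.
rewrite (ridge_argmin_closed_form uo1_min us1_min).
rewrite (ridge_argmin_closed_form uo2_min us2_min).
rewrite opprD addrACA -!mulmxBr; apply: le_trans (ler_enormD _ _) _.
apply: lerD.
- exact: enorm_mulmx_le_opnorm kappa_bound_ge0 enorm_kappa_le _.
- exact: enorm_mulmx_le_opnorm alpha_bound_ge0 enorm_alpha_le _.
Qed.

End RidgeMinimizers.

Theorem propositionC3 (R : realType) (m d : nat) (A : 'M[R]_(m, d))
  (mu L lam : R) (T : nat) (b : nat -> 'cV[R]_m) (c : nat -> 'cV[R]_d)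
  (uo us : nat -> 'cV[R]_d) :
  0 < mu -> mu <= L -> 0 <= lam ->
  loewner_le (mu%:M) (A^T *m A) -> loewner_le (A^T *m A) (L%:M) ->
  (forall t, (1 <= t <= T)%N ->
     is_argmin (fun u => 2^-1 * enorm (A *m u - b t) ^+ 2) (uo t)) ->
  (forall t, (1 <= t <= T)%N ->
     is_argmin (fun u => 2^-1 * enorm (A *m u - b t) ^+ 2
                         + lam / 2 * enorm (u - c t) ^+ 2) (us t)) ->
  let H := A^T *m A in
  let kappa := opnorm (invmx (H + lam%:M) *m H) in
  let alpha := opnorm (lam *: invmx (H + lam%:M)) in
  [/\ kappa <= L / (mu + lam),
      alpha <= lam / (mu + lam),
      (forall t, (2 <= t <= T)%N ->
         enorm (us t - us t.-1) <=
           kappa * enorm (uo t - uo t.-1) + alpha * enorm (c t - c t.-1))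
    & \sum_(2 <= t < T.+1) enorm (us t - us t.-1) <=
        kappa * (\sum_(2 <= t < T.+1) enorm (uo t - uo t.-1))
        + alpha * (\sum_(2 <= t < T.+1) enorm (c t - c t.-1))].
Proof.
move=> mu_gt0 mu_le_L lam_ge0 mu_le_H H_le_L uo_min us_min H kappa alpha.
have drift t : (2 <= t <= T)%N ->
    enorm (us t - us t.-1) <=
    kappa * enorm (uo t - uo t.-1) + alpha * enorm (c t - c t.-1).
  move=> t_range; have t1_range : (1 <= t.-1 <= T)%N by lia.
  have {}t_range : (1 <= t <= T)%N by lia.
  exact: (ridge_argmin_drift mu_gt0 mu_le_L lam_ge0 mu_le_H H_le_L
    (uo_min _ t1_range) (uo_min _ t_range) (us_min _ t1_range) (us_min _ t_range)).
split=> //.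
  exact: opnorm_kappa_le mu_gt0 mu_le_L lam_ge0 mu_le_H H_le_L.
  exact: opnorm_alpha_le mu_gt0 lam_ge0 mu_le_H.
rewrite !mulr_sumr -big_split /=; apply: ler_sum_nat => t t_range.
by apply: drift; lia.
Qed.
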